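(* Let $R$ be an almost Dedekind domain. Then $\mathrm{Crit}_\alpha(R)\subseteq\partial^\alpha(\mathcal{M})$ for every ordinal $\alpha$.
   Context: $R$ almost Dedekind: $R_M$ is a DVR for each maximal $M$; $K$ quotient field. $\mathcal{M}$ is $\mathrm{Max}(R)$ with the inverse topology (restriction of the coarsest topology on $\mathrm{Spec}(R)$ in which Zariski-open Zariski-compact sets are closed). For a space $X$: $\partial^0(X)=X$, $\partial^{\gamma+1}(X)$ is the set of non-isolated points of $\partial^\gamma(X)$ (subspace topology), $\partial^\lambda(X)=\bigcap_{\beta<\lambda}\partial^\beta(X)$ for limit $\lambda$. A maximal ideal $M$ of an almost Dedekind domain $A$ is critical if every finitely generated ideal $J\subseteq M$ satisfies $J\subseteq N^2$ for some maximal $N$; $\mathrm{Crit}(A)$ is the set of these. Recursively: $\mathrm{Crit}_0(R)=\mathrm{Max}(R)$, $T_0=R$; $\mathrm{Crit}_{\gamma+1}(R)=\{P\in\mathrm{Max}(R)\mid PT_\gamma\in\mathrm{Crit}(T_\gamma)\}$; $\mathrm{Crit}_\lambda(R)=\bigcap_{\gamma<\lambda}\mathrm{Crit}_\gamma(R)$ for limit $\lambda$; $T_\alpha=\bigcap\{R_P\mid P\in\mathrm{Crit}_\alpha(R)\}$ ($=K$ if empty). *)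

From HB Require Import structures.
From mathcomp Require Import all_boot all_order all_algebra.
From mathcomp Require Import boolp classical_sets.
Set Implicit Arguments. Unset Strict Implicit. Unset Printing Implicit Defensive.
Import Order.TTheory GRing.Theory Num.Theory.
Local Open Scope ring_scope.
Local Open Scope classical_set_scope.

Section AlmostDedekind.
Variable K : fieldType.

(** Rings are represented as subrings of the field K. *)
Definition is_subring (A : set K) : Prop :=
  A 1 /\ (forall x y, A x -> A y -> A (x - y)) /\
  (forall x y, A x -> A y -> A (x * y)).

Definition is_quotient_field_of (A : set K) : Prop :=
  forall x : K, exists a b, A a /\ A b /\ b != 0 /\ x = a / b.

Definition is_ideal (A I : set K) : Prop :=
  I `<=` A /\ I 0 /\ (forall x y, I x -> I y -> I (x + y)) /\
  (forall a x, A a -> I x -> I (a * x)).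

Definition is_prime_ideal (A P : set K) : Prop :=
  is_ideal A P /\ ~ P 1 /\
  (forall x y, A x -> A y -> P (x * y) -> P x \/ P y).

Definition is_maximal_ideal (A M : set K) : Prop :=
  is_ideal A M /\ ~ M 1 /\
  (forall J, is_ideal A J -> M `<=` J -> J = M \/ J = A).

Definition Spec (A : set K) : set (set K) := [set P | is_prime_ideal A P].
Definition Max (A : set K) : set (set K) := [set M | is_maximal_ideal A M].

Definition ideal_gen (A S : set K) : set K :=
  [set x | forall I, is_ideal A I -> S `<=` I -> I x].

Definition ideal_sq (A N : set K) : set K :=
  ideal_gen A [set x | exists a b, N a /\ N b /\ x = a * b].

Definition localization (A M : set K) : set K :=
  [set x | exists a s, A a /\ A s /\ ~ M s /\ x = a / s].

Definition is_DVR (V : set K) : Prop :=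
  exists v : K -> int,
    (forall x y, x != 0 -> y != 0 -> v (x * y) = v x + v y) /\
    (forall x y, x != 0 -> y != 0 -> x + y != 0 ->
        Num.min (v x) (v y) <= v (x + y)) /\
    (forall n : int, exists x, x != 0 /\ v x = n) /\
    V = [set x | x = 0 \/ (x != 0 /\ 0 <= v x)].

Definition almost_dedekind (A : set K) : Prop :=
  is_subring A /\ forall M, is_maximal_ideal A M -> is_DVR (localization A M).

Definition Crit (A : set K) : set (set K) :=
  [set M | is_maximal_ideal A M /\
     forall s : seq K, (forall x, x \in s -> A x) ->
       ideal_gen A [set x | x \in s] `<=` M ->
       exists N, is_maximal_ideal A N /\
                 ideal_gen A [set x | x \in s] `<=` ideal_sq A N].

(** T = intersection of R_P over P in C (= K if C is empty) *)
Definition T_of (R : set K) (C : set (set K)) : set K :=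
  [set x | forall P, C P -> localization R P x].

Definition zariski_open (A : set K) (U : set (set K)) : Prop :=
  exists S, S `<=` A /\ U = [set P | Spec A P /\ ~ (S `<=` P)].

Definition zariski_compact (A : set K) (U : set (set K)) : Prop :=
  forall F : set (set (set K)), (forall V, F V -> zariski_open A V) ->
    U `<=` \bigcup_(V in F) V ->
    exists (n : nat) (f : nat -> set (set K)),
      (forall i, (i < n)%N -> F (f i)) /\
      U `<=` [set P | exists i, (i < n)%N /\ f i P].

Definition is_topology {X : Type} (Y : set X) (O : set (set X)) : Prop :=
  (forall U, O U -> U `<=` Y) /\ O Y /\ O set0 /\
  (forall F, F `<=` O -> O (\bigcup_(U in F) U)) /\
  (forall U V, O U -> O V -> O (U `&` V)).

Definition generated_open {X : Type} (Y : set X) (S : set (set X))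
  (U : set X) : Prop :=
  forall O, is_topology Y O -> S `<=` O -> O U.

Definition inverse_open (A : set K) (U : set (set K)) : Prop :=
  generated_open (Spec A)
    [set W | exists V, zariski_open A V /\ zariski_compact A V /\
                       W = Spec A `\` V] U.

Definition nonisolated (A : set K) (B : set (set K)) : set (set K) :=
  [set x | B x /\ forall U, inverse_open A U -> U x ->
                 exists y, B y /\ U y /\ y <> x].

(** Well-orders (standing in for ordinals) *)
Definition is_wellorder {W : Type} (lt : W -> W -> Prop) : Prop :=
  (forall x y z, lt x y -> lt y z -> lt x z) /\ (forall x, ~ lt x x) /\
  (forall x y, lt x y \/ x = y \/ lt y x) /\ well_founded lt.

Definition is_zero {W : Type} (lt : W -> W -> Prop) (w : W) : Prop :=
  forall u, ~ lt u w.
Definition is_succ_of {W : Type} (lt : W -> W -> Prop) (v w : W) : Prop :=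
  lt v w /\ forall u, ~ (lt v u /\ lt u w).
Definition is_limit {W : Type} (lt : W -> W -> Prop) (w : W) : Prop :=
  ~ is_zero lt w /\ forall v, ~ is_succ_of lt v w.

(** C w = Crit_w(R), defined by transfinite recursion along lt *)
Definition crit_seq (R : set K) {W : Type} (lt : W -> W -> Prop)
  (C : W -> set (set K)) : Prop :=
  forall w,
    (is_zero lt w -> C w = Max R) /\
    (forall v, is_succ_of lt v w ->
       C w = [set P | Max R P /\
                Crit (T_of R (C v)) (ideal_gen (T_of R (C v)) P)]) /\
    (is_limit lt w -> C w = [set P | forall v, lt v w -> C v P]).

(** D w = partial^w(M), Cantor-Bendixson derivatives of Max(R) *)
Definition deriv_seq (R : set K) {W : Type} (lt : W -> W -> Prop)
  (D : W -> set (set K)) : Prop :=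
  forall w,
    (is_zero lt w -> D w = Max R) /\
    (forall v, is_succ_of lt v w -> D w = nonisolated R (D v)) /\
    (is_limit lt w -> D w = [set P | forall v, lt v w -> D v P]).

End AlmostDedekind.

(* Induction along the well-order shows that Crit_w(R) consists of maximal
   ideals and lies in the derivative D_w, and that D_w is closed in Max(R).
   In the inverse topology every neighbourhood of a prime contains a locus
   V(s) = {Q | s <= Q} for some finite s inside that prime.  Put
   T = /\_{P in C} R_P.  If a maximal ideal Q is the contraction of an ideal
   of T, then every such V(s) around Q meets C: otherwise, for a uniformizer
   t of R_Q and a common denominator d outside Q of the j/t (j in s), the
   element d/t lies in T although (d/t) t = d is not in Q.
   Successor step: let PT be critical in T.  Then PT meets R in P, so P is
   adherent to C, hence lies in D.  Given V(s) around P and a uniformizer t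
   of R_P, criticality gives a maximal ideal N of T with (t, s)T <= N^2.  Its
   contraction Q is a nonzero prime, hence maximal, lies in V(s), is adherent
   to C, and differs from P because T <= R_P keeps t out of (PT)^2. *)

From mathcomp Require Import all_boot all_order all_algebra.
From mathcomp Require Import boolp classical_sets.
From mathcomp Require Import ring zify.
Set Implicit Arguments. Unset Strict Implicit. Unset Printing Implicit Defensive.
Import Order.TTheory GRing.Theory Num.Theory.
Local Open Scope ring_scope.
Local Open Scope classical_set_scope.

Section Subrings.
Variables (K : fieldType) (A : set K).
Hypothesis hA : is_subring A.

Lemma subring1 : A 1. Proof. by case: hA. Qed.

Lemma subringB x y : A x -> A y -> A (x - y). Proof. by case: hA => _ [+ _]; apply. Qed.

Lemma subringM x y : A x -> A y -> A (x * y). Proof. by case: hA => _ [_]; apply. Qed.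

Lemma subring0 : A 0.
Proof. by rewrite -(subrr 1); apply: subringB subring1 subring1. Qed.

Lemma subringN x : A x -> A (- x).
Proof. by move=> Ax; rewrite -sub0r; apply: subringB subring0 Ax. Qed.

Lemma subringD x y : A x -> A y -> A (x + y).
Proof. by move=> Ax Ay; rewrite -[y]opprK; apply: subringB (subringN Ay). Qed.

Lemma subringX x n : A x -> A (x ^+ n).
Proof.
move=> Ax; elim: n => [|n IH]; rewrite ?expr0 ?exprS.
  exact: subring1.
exact: subringM.
Qed.

End Subrings.

Section Ideals.
Variable K : fieldType.
Implicit Types (A I M S : set K).

Lemma ideal_sub A I : is_ideal A I -> I `<=` A. Proof. by case. Qed.

Lemma ideal0 A I : is_ideal A I -> I 0. Proof. by case=> _ []. Qed.

Lemma idealD A I x y : is_ideal A I -> I x -> I y -> I (x + y).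
Proof. by case=> _ [_ [+ _]]; apply. Qed.

Lemma idealMl A I a x : is_ideal A I -> A a -> I x -> I (a * x).
Proof. by case=> _ [_ [_]]; apply. Qed.

Lemma ideal_neq0 A I x : is_ideal A I -> ~ I x -> x != 0.
Proof. by move=> hI Ix; apply: contra_notN Ix => /eqP->; exact: ideal0 hI. Qed.

Lemma ideal_gen_sub A S : S `<=` ideal_gen A S.
Proof. by move=> x Sx I _; apply. Qed.

Lemma ideal_gen_min A S I : is_ideal A I -> S `<=` I -> ideal_gen A S `<=` I.
Proof. by move=> hI SI x; apply. Qed.

Lemma ideal_sq_sub A I : is_ideal A I -> ideal_sq A I `<=` I.
Proof.
move=> hI; apply: ideal_gen_min => // _ [a [b [Ia [Ib ->]]]].
exact: idealMl (ideal_sub hI Ia) Ib.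
Qed.

Lemma ideal1_full A I : is_ideal A I -> I 1 -> A `<=` I.
Proof. by move=> hI I1 x Ax; rewrite -[x]mulr1; exact: idealMl hI Ax I1. Qed.

Lemma ideal_setIr A T N : is_subring A -> A `<=` T -> is_ideal T N ->
  is_ideal A (N `&` A).
Proof.
move=> hA AT hN; split; first by move=> x [].
split; first by split; [exact: ideal0 hN|exact: subring0].
split=> [x y [Nx Ax] [Ny Ay]|a x Aa [Nx Ax]]; split.
- exact: idealD hN Nx Ny.
- exact (subringD hA Ax Ay).
- exact: idealMl hN (AT _ Aa) Nx.
- exact (subringM hA Aa Ax).
Qed.

Lemma prime_idealM_notin A P x y : is_prime_ideal A P -> A x -> A y ->
  ~ P x -> ~ P y -> ~ P (x * y).
Proof. by move=> [_ [_ hP]] Ax Ay Px Py /(hP _ _ Ax Ay) []. Qed.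

Lemma prime_idealX A P x n : is_prime_ideal A P -> is_subring A -> A x ->
  P (x ^+ n) -> P x.
Proof.
move=> hP hA Ax; elim: n => [|n IH]; first by rewrite expr0 => P1; case: hP => _ [].
by rewrite exprS => /(hP.2.2 _ _ Ax (subringX hA n Ax)) [|/IH].
Qed.

Definition ideal_adjoin A M x : set K :=
  [set z | exists m a, M m /\ A a /\ z = m + a * x].

Lemma ideal_adjoin_ideal A M x : is_subring A -> is_ideal A M -> A x ->
  is_ideal A (ideal_adjoin A M x).
Proof.
move=> hA hM Ax; split; [|split; [|split]].
- move=> _ [m [a [Mm [Aa ->]]]].
  exact (subringD hA (ideal_sub hM Mm) (subringM hA Aa Ax)).
- exists 0, 0; rewrite mul0r addr0.
  by split; [exact: ideal0 hM|split; [exact: subring0 hA|]].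
- move=> _ _ [m1 [a1 [M1 [A1 ->]]]] [m2 [a2 [M2 [A2 ->]]]].
  exists (m1 + m2), (a1 + a2); split; first exact: idealD hM M1 M2.
  by split; [exact (subringD hA A1 A2)|ring].
- move=> b _ Ab [m [a [Mm [Aa ->]]]]; exists (b * m), (b * a).
  by split; [exact: idealMl hM Ab Mm|split; [exact (subringM hA Ab Aa)|ring]].
Qed.

Lemma sub_ideal_adjoin A M x : is_subring A -> M `<=` ideal_adjoin A M x.
Proof.
move=> hA m Mm; exists m, 0; rewrite mul0r addr0.
by split; [|split; [exact: subring0 hA|]].
Qed.

Lemma ideal_adjoin_gen A M x : is_subring A -> is_ideal A M ->
  ideal_adjoin A M x x.
Proof.
move=> hA hM; exists 0, 1; rewrite mul1r add0r.
by split; [exact: ideal0 hM|split; [exact: subring1 hA|]].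
Qed.

Lemma maximal_ideal_prime A M : is_subring A -> is_maximal_ideal A M ->
  is_prime_ideal A M.
Proof.
move=> hA [hM [M1 Mmax]]; split=> //; split=> // x y Ax Ay Mxy.
have [Mx|Mx] := pselect (M x); [by left|right].
have [JM|JA] := Mmax _ (ideal_adjoin_ideal hA hM Ax) (sub_ideal_adjoin x hA).
  by exfalso; apply: Mx; rewrite -JM; exact: ideal_adjoin_gen.
have [m [a [Mm [Aa e]]]] : ideal_adjoin A M x 1 by rewrite JA; exact: subring1 hA.
have -> : y = y * m + a * (x * y) by rewrite -[y in LHS]mulr1 e; ring.
exact: idealD hM (idealMl hM Ay Mm) (idealMl hM Aa Mxy).
Qed.

Lemma ideal_setIr_prime A T N : is_subring A -> is_subring T -> A `<=` T ->
  is_maximal_ideal T N -> is_prime_ideal A (N `&` A).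
Proof.
move=> hA hT AT hN; have [hNT [N1 hNp]] := maximal_ideal_prime hT hN.
split; first exact: ideal_setIr hNT.
split=> [[]//|x y Ax Ay [Nxy _]].
by case: (hNp x y (AT _ Ax) (AT _ Ay) Nxy) => h; [left|right].
Qed.

End Ideals.

Section Localization.
Variables (K : fieldType) (R P : set K).
Hypotheses (hR : is_subring R) (hP : is_prime_ideal R P).

Lemma sub_localization : R `<=` localization R P.
Proof.
move=> x Rx; exists x, 1; split=> //; split; first exact: subring1 hR.
by split; [case: hP => _ []|rewrite divr1].
Qed.

Lemma localizationB x y : localization R P x -> localization R P y ->
  localization R P (x - y).
Proof.
move=> [a [s [Ra [Rs [Ps ->]]]]] [b [u [Rb [Ru [Pu ->]]]]].
have [s0 u0] := (ideal_neq0 hP.1 Ps, ideal_neq0 hP.1 Pu).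
exists (a * u - b * s), (s * u); split.
  exact (subringB hR (subringM hR Ra Ru) (subringM hR Rb Rs)).
split; first exact (subringM hR Rs Ru).
by split; [exact (prime_idealM_notin hP Rs Ru Ps Pu)|field; rewrite s0 u0].
Qed.

Lemma localizationM x y : localization R P x -> localization R P y ->
  localization R P (x * y).
Proof.
move=> [a [s [Ra [Rs [Ps ->]]]]] [b [u [Rb [Ru [Pu ->]]]]].
have [s0 u0] := (ideal_neq0 hP.1 Ps, ideal_neq0 hP.1 Pu).
exists (a * b), (s * u); split; first exact (subringM hR Ra Rb).
split; first exact (subringM hR Rs Ru).
by split; [exact (prime_idealM_notin hP Rs Ru Ps Pu)|field; rewrite s0 u0].
Qed.

Lemma localization_subring : is_subring (localization R P).
Proof.
split; first exact: sub_localization (subring1 hR).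
by split=> x y; [exact: localizationB|exact: localizationM].
Qed.

End Localization.

Section Overrings.
Variables (K : fieldType) (R : set K) (C : set (set K)).
Hypotheses (hR : is_subring R) (hC : C `<=` Spec R).

Lemma sub_T_of : R `<=` T_of R C.
Proof. by move=> x Rx P CP; exact (sub_localization hR (hC CP) Rx). Qed.

Lemma T_of_subring : is_subring (T_of R C).
Proof.
have hL P : C P -> is_subring (localization R P).
  by move=> CP; exact: localization_subring hR (hC CP).
split; first by move=> P CP; exact: subring1 (hL P CP).
split=> x y Tx Ty P CP.
- exact (subringB (hL P CP) (Tx P CP) (Ty P CP)).
- exact (subringM (hL P CP) (Tx P CP) (Ty P CP)).
Qed.

End Overrings.

Definition contracted_from (K : fieldType) (T R Q : set K) : Prop :=
  exists N, is_ideal T N /\ N `&` R = Q.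

Lemma contracted_absorb (K : fieldType) (T R Q : set K) x a :
  contracted_from T R Q -> T x -> Q a -> R (x * a) -> Q (x * a).
Proof.
move=> [N [hN <-]] Tx [Na _] Rxa; split=> //; exact: idealMl hN Tx Na.
Qed.

Section Valuation.
Variable K : fieldType.

Definition is_valuation_of (V : set K) (v : K -> int) : Prop :=
  (forall x y, x != 0 -> y != 0 -> v (x * y) = v x + v y) /\
  (forall x y, x != 0 -> y != 0 -> x + y != 0 ->
     Num.min (v x) (v y) <= v (x + y)) /\
  (forall n : int, exists x, x != 0 /\ v x = n) /\
  V = [set x | x = 0 \/ (x != 0 /\ 0 <= v x)].

Lemma almost_dedekind_valuation R M : almost_dedekind R ->
  is_maximal_ideal R M -> exists v, is_valuation_of (localization R M) v.
Proof. by case=> _; apply. Qed.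

Variables (R P : set K) (v : K -> int).
Hypotheses (hR : is_subring R) (hP : is_prime_ideal R P).
Hypothesis hv : is_valuation_of (localization R P) v.

Lemma valM x y : x != 0 -> y != 0 -> v (x * y) = v x + v y.
Proof. by case: hv => + _; apply. Qed.

Lemma val_min x y : x != 0 -> y != 0 -> x + y != 0 ->
  Num.min (v x) (v y) <= v (x + y).
Proof. by case: hv => _ [+ _]; apply. Qed.

Lemma localization_val x : localization R P x <-> x = 0 \/ 0 <= v x.
Proof.
case: hv => _ [_ [_ ->]] /=; split; first by case=> [->|[_ vx]]; [left|right].
case=> [->|vx]; first by left.
by have [->|x0] := eqVneq x 0; [left|right].
Qed.

Lemma val1 : v 1 = 0.
Proof. by have := @valM 1 1 (oner_neq0 _) (oner_neq0 _); rewrite mulr1; lia. Qed.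

Lemma valV x : x != 0 -> v x^-1 = - v x.
Proof.
move=> x0; have := valM (invr_neq0 x0) x0.
by rewrite mulVf // val1; lia.
Qed.

Lemma val_div x y : x != 0 -> y != 0 -> v (x / y) = v x - v y.
Proof. by move=> x0 y0; rewrite valM ?invr_neq0 // valV. Qed.

Lemma valX x n : x != 0 -> v (x ^+ n) = n%:Z * v x.
Proof.
move=> x0; elim: n => [|n IH]; first by rewrite expr0 val1 mul0r.
rewrite exprS valM ?expf_neq0 // IH; lia.
Qed.

Lemma val_ge0 x : R x -> x != 0 -> 0 <= v x.
Proof.
move=> Rx x0; case/localization_val: (sub_localization hR hP Rx) => // /eqP.
by rewrite (negbTE x0).
Qed.

Lemma val_notin x : R x -> ~ P x -> v x = 0.
Proof.
move=> Rx Px; have x0 := ideal_neq0 hP.1 Px.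
have : localization R P x^-1.
  by exists 1, x; rewrite div1r; split; [exact: subring1|].
case/localization_val => [/eqP|]; first by rewrite invr_eq0 (negbTE x0).
by have := val_ge0 Rx x0; rewrite valV //; lia.
Qed.

Lemma val_gt0 x : P x -> x != 0 -> 0 < v x.
Proof.
move=> Px x0; have Rx := ideal_sub hP.1 Px.
rewrite lt_def val_ge0 // andbT; apply/eqP => vx.
have : localization R P x^-1 by apply/localization_val; right; rewrite valV // vx.
move=> [a [s [Ra [Rs [Ps e]]]]]; have s0 := ideal_neq0 hP.1 Ps.
move/eqP: e; rewrite -div1r eqr_div // mul1r => /eqP sE.
by apply: Ps; rewrite sE; exact: idealMl hP.1 Ra Px.
Qed.

Lemma exists_uniformizer : exists t, P t /\ t != 0 /\ v t = 1.
Proof.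
have [_ [_ [/(_ 1) [y [y0 vy]] _]]] := hv.
have : localization R P y by apply/localization_val; right; rewrite vy.
move=> [a [s [Ra [Rs [Ps e]]]]].
have s0 := ideal_neq0 hP.1 Ps.
have a0 : a != 0 by apply: contraNneq y0 => a0; rewrite e a0 mul0r.
have va : v a = 1 by have := val_div a0 s0; rewrite -e vy (val_notin Rs Ps); lia.
exists a; split=> //; apply: contrapT => Pa.
by move: va; rewrite (val_notin Ra Pa).
Qed.

Lemma localization_div_uniformizer t x : t != 0 -> v t = 1 -> P x ->
  localization R P (x / t).
Proof.
move=> t0 vt Px; apply/localization_val.
have [->|x0] := eqVneq x 0; first by left; rewrite mul0r.
by right; rewrite val_div // vt subr_ge0; exact: val_gt0.
Qed.

Lemma val_ideal T (k : int) : 0 <= k -> is_subring T ->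
  T `<=` localization R P -> is_ideal T [set z | T z /\ (z = 0 \/ k <= v z)].
Proof.
move=> k0 hT TL; split; first by move=> z [].
split; first by split; [exact: subring0|left].
split=> [x y [Tx hx] [Ty hy]|a x Ta [Tx hx]].
  split; first exact (subringD hT Tx Ty).
  have [->|x0] := eqVneq x 0; first by rewrite add0r.
  have [->|y0] := eqVneq y 0; first by rewrite addr0.
  have [->|xy0] := eqVneq (x + y) 0; first by left.
  case: hx => [/eqP|hx]; first by rewrite (negbTE x0).
  case: hy => [/eqP|hy]; first by rewrite (negbTE y0).
  by right; apply: le_trans (val_min x0 y0 xy0); rewrite le_min hx hy.
split; first exact (subringM hT Ta Tx).
have [->|a0] := eqVneq a 0; first by left; rewrite mul0r.
have [->|x0] := eqVneq x 0; first by left; rewrite mulr0.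
case: hx => [/eqP|hx]; first by rewrite (negbTE x0).
case/localization_val: (TL _ Ta) => [/eqP|va]; first by rewrite (negbTE a0).
by right; rewrite valM //; lia.
Qed.

Lemma contracted_sub_localization T : contracted_from T R P ->
  T `<=` localization R P.
Proof.
move=> cP x Tx; apply/localization_val.
have [->|x0] := eqVneq x 0; [by left|right].
rewrite leNgt; apply/negP => vx.
have : localization R P x^-1 by apply/localization_val; right; rewrite valV //; lia.
move=> [p [s [Rp [Rs [Ps e]]]]]; have s0 := ideal_neq0 hP.1 Ps.
have p0 : p != 0 by apply: contraNneq (invr_neq0 x0) => p0; rewrite e p0 mul0r.
have Pp : P p.
  apply: contrapT => Pp; have := val_div p0 s0.
  by rewrite -e valV // (val_notin Rp Pp) (val_notin Rs Ps); lia.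
move/eqP: e; rewrite -div1r eqr_div // mul1r mulrC => /eqP sE.
by apply: Ps; rewrite sE; apply: contracted_absorb cP Tx Pp _; rewrite -sE.
Qed.

Lemma uniformizer_notin_sq T t : R `<=` T -> is_subring T ->
  T `<=` localization R P -> t != 0 -> v t = 1 -> ~ ideal_sq T (ideal_gen T P) t.
Proof.
move=> RT hT TL t0 vt.
have PI1 : ideal_gen T P `<=` [set z | T z /\ (z = 0 \/ 1 <= v z)].
  apply: ideal_gen_min (val_ideal ler01 hT TL) _ => x Px.
  split; first exact: RT (ideal_sub hP.1 Px).
  by have [->|x0] := eqVneq x 0; [left|right; exact: val_gt0].
have sqI2 : ideal_sq T (ideal_gen T P) `<=` [set z | T z /\ (z = 0 \/ 2 <= v z)].
  apply: ideal_gen_min (val_ideal (ler0n _ 2) hT TL) _ => _ [a [b [PTa [PTb ->]]]].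
  have [[Ta ha] [Tb hb]] := (PI1 _ PTa, PI1 _ PTb).
  split; first exact (subringM hT Ta Tb).
  have [->|a0] := eqVneq a 0; first by left; rewrite mul0r.
  have [->|b0] := eqVneq b 0; first by left; rewrite mulr0.
  case: ha => [/eqP|va]; first by rewrite (negbTE a0).
  case: hb => [/eqP|vb]; first by rewrite (negbTE b0).
  by right; rewrite valM //; lia.
by move=> /sqI2 [_ [/eqP|]]; [rewrite (negbTE t0)|rewrite vt].
Qed.

End Valuation.

Section MaximalIdeals.
Variable K : fieldType.
Implicit Types (A I J R Q : set K) (F : set (set K)).

Lemma bigcup_chain_ideal A F : (exists2 J, F J & J !=set0) ->
  (forall J, F J -> J !=set0 -> is_ideal A J) -> total_on F subset ->
  is_ideal A (\bigcup_(J in F) J).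
Proof.
move=> [J0 FJ0 [x0 J0x0]] hF tot.
have hFx J x : F J -> J x -> is_ideal A J by move=> FJ Jx; apply: hF FJ _; exists x.
split; first by move=> x [J FJ Jx]; exact (ideal_sub (hFx J x FJ Jx) Jx).
split; first by exists J0 => //; exact: ideal0 (hFx _ _ FJ0 J0x0).
split=> [x y [J1 FJ1 J1x] [J2 FJ2 J2y]|a x Aa [J FJ Jx]].
  have [J12|J21] := tot _ _ FJ1 FJ2.
  - by exists J2 => //; exact: idealD (hFx _ _ FJ2 J2y) (J12 _ J1x) J2y.
  - by exists J1 => //; exact: idealD (hFx _ _ FJ1 J1x) J1x (J21 _ J2y).
by exists J => //; exact: idealMl (hFx _ _ FJ Jx) Aa Jx.
Qed.

Lemma exists_maximal_ideal A I : is_ideal A I -> ~ I 1 ->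
  exists M, is_maximal_ideal A M /\ I `<=` M.
Proof.
move=> hI I1.
(* [set0] belongs to [P] so that the union of the empty chain does. *)
pose P := [set J | J = set0 \/ [/\ is_ideal A J, I `<=` J & ~ J 1]].
have [|M [PM Mmax]] := @Zorn_bigcup K P.
  move=> F FP tot.
  have FI J : F J -> J !=set0 -> [/\ is_ideal A J, I `<=` J & ~ J 1].
    by move=> FJ [x Jx]; case: (FP J FJ) => // J0; rewrite J0 in Jx.
  have [[J FJ J0]|F0] := pselect (exists2 J, F J & J !=set0); last first.
    by left; apply/seteqP; split=> // x [J FJ Jx]; apply: F0; exists J => //; exists x.
  right; split.
  - by apply: bigcup_chain_ideal => [|J' FJ' /(FI J' FJ') []|]; first exists J.
  - by move=> x Ix; exists J => //; have [_ IJ _] := FI J FJ J0; exact: IJ.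
  - by move=> [J' FJ' J'1]; case: (FI J' FJ' (ex_intro _ 1 J'1)) => _ _; apply.
case: PM => [M0|[hM IM M1]].
  exfalso; apply: (Mmax I); last by right; split.
  by rewrite M0; split=> // /(_ 0 (ideal0 hI)).
exists M; split=> //; split=> //; split=> // J hJ MJ.
have [J1|J1] := pselect (J 1).
  by right; apply/seteqP; split; [exact: ideal_sub hJ|exact: ideal1_full hJ J1].
left; apply/seteqP; split=> //; apply: contrapT => JM.
by apply: (Mmax J); [split|right; split=> //; exact: subset_trans IM MJ].
Qed.

Lemma prime_neq0_maximal R Q q : almost_dedekind R -> is_prime_ideal R Q ->
  Q q -> q != 0 -> is_maximal_ideal R Q.
Proof.
move=> hAD hQ Qq q0; have hR := hAD.1.
have [M [hM QM]] := exists_maximal_ideal hQ.1 hQ.2.1.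
suff MQ : M `<=` Q by rewrite (_ : Q = M) //; apply/seteqP; split.
have hMp := maximal_ideal_prime hR hM.
have [v hv] := almost_dedekind_valuation hAD hM.
move=> m Mm; have [->|m0] := eqVneq m 0; first exact: ideal0 hQ.1.
have Rm := ideal_sub hM.1 Mm.
have vq := val_gt0 hR hMp hv (QM _ Qq) q0.
have vm := val_gt0 hR hMp hv Mm m0.
pose n := `|v q|%N.
have : localization R M (m ^+ n / q).
  apply/(localization_val hv); right.
  rewrite (val_div hv) ?expf_neq0 // (valX hv) // /n abszE gtr0_norm //; nia.
move=> [r [s [Rr [Rs [Ms /eqP e]]]]]; have s0 := ideal_neq0 hMp.1 Ms.
move: e; rewrite eqr_div // => /eqP e.
have : Q (m ^+ n * s) by rewrite e; exact: idealMl hQ.1 Rr Qq.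
case/(hQ.2.2 _ _ (subringX hR n Rm) Rs) => [|Qs]; first exact (prime_idealX hQ hR Rm).
by exfalso; apply: Ms; exact (QM _ Qs).
Qed.

End MaximalIdeals.

Section InverseTopology.
Variable K : fieldType.
Implicit Types (R : set K) (U V : set (set K)).

Definition locus R (s : seq K) : set (set K) :=
  [set Q | Spec R Q /\ [set` s] `<=` Q].

Definition locus_open R U : Prop :=
  U `<=` Spec R /\
  forall P, U P -> exists s : seq K, [set` s] `<=` P /\ locus R s `<=` U.

Lemma locus_open_topology R : is_topology (Spec R) (locus_open R).
Proof.
split; first by move=> U [].
split; first by split=> // P SP; exists [::]; split=> // Q [].
split; first by split=> // P [].
split=> [F FO|U V [US hU] [VS hV]].
  split; first by move=> P [U FU UP]; exact: (FO U FU).1 _ UP.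
  move=> P [U FU UP]; have [s [sP sU]] := (FO U FU).2 P UP.
  by exists s; split=> // Q LQ; exists U => //; exact: sU.
split; first by move=> P [UP _]; exact: US.
move=> P [UP VP]; have [s1 [s1P s1U]] := hU P UP; have [s2 [s2P s2V]] := hV P VP.
exists (s1 ++ s2); split=> [x|Q [SQ sQ]].
  by rewrite /= mem_cat => /orP[]; [exact: s1P|exact: s2P].
by split; [apply: s1U|apply: s2V]; split=> // x xs; apply: sQ;
  rewrite /= mem_cat xs ?orbT.
Qed.

Lemma seq_of_choices (T : eqType) n (P : nat -> T -> Prop) :
  (forall i, (i < n)%N -> exists x, P i x) ->
  exists s : seq T, (forall x, x \in s -> exists2 i, (i < n)%N & P i x) /\
                    (forall i, (i < n)%N -> exists2 x, x \in s & P i x).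
Proof.
elim: n => [|n IH] hP; first by exists [::].
have [s [sP Ps]] := IH (fun i lt_in => hP i (ltnW lt_in)).
have [x Px] := hP n (ltnSn n).
exists (x :: s); split=> [y|i].
  rewrite in_cons => /orP[/eqP->|/sP[i lt_in Pi]]; first by exists n.
  by exists i => //; exact: ltnW.
rewrite ltnS leq_eqVlt => /orP[/eqP->|lt_in]; first by exists x; rewrite ?mem_head.
by have [y ys Py] := Ps i lt_in; exists y; rewrite // in_cons ys orbT.
Qed.

Lemma compact_open_locus R V : zariski_open R V -> zariski_compact R V ->
  exists s : seq K, Spec R `\` V = locus R s.
Proof.
move=> [S [SR ->]] hc.
pose D x := [set Q | Spec R Q /\ ~ [set x] `<=` Q].
have [|Q [SQ nSQ]|n [f [hf cov]]] := hc [set U | exists2 x, S x & U = D x].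
- move=> _ [x Sx ->]; exists [set x]; split=> // _ ->; exact: SR.
- have [x Sx nQx] : exists2 x, S x & ~ Q x.
    apply: contrapT => h; apply: nSQ => x Sx; apply: contrapT => nQx; apply: h.
    by exists x.
  by exists (D x); [exists x|split=> // /(_ x erefl)].
have [s [sS fs]] : exists s : seq K,
    (forall x, x \in s -> exists2 i, (i < n)%N & S x /\ f i = D x) /\
    (forall i, (i < n)%N -> exists2 x, x \in s & S x /\ f i = D x).
  by apply: seq_of_choices => i /hf [x Sx ->]; exists x.
exists s; apply/seteqP; split=> [Q [SQ nVQ]|Q [SQ sQ]].
  split=> // x /sS [i _ [Sx _]]; apply: contrapT => nQx; apply: nVQ.
  by split=> // /(_ x Sx).
split=> // VQ; have [i [lt_in fiQ]] := cov Q VQ; have [x xs [_ fiD]] := fs i lt_in.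
by move: fiQ; rewrite fiD => -[_]; apply=> _ ->; exact: sQ.
Qed.

Lemma inverse_open_locus R U P : inverse_open R U -> U P ->
  exists s : seq K, [set` s] `<=` P /\ locus R s `<=` U.
Proof.
move=> hU; suff [_] : locus_open R U by apply.
apply: hU => [|_ [V [oV [cV ->]]]]; first exact: locus_open_topology.
have [s ->] := compact_open_locus oV cV.
by split=> [Q [SQ _]|P' [SP sP]] //; exists s; split.
Qed.

Definition adherent R (C : set (set K)) (P : set K) : Prop :=
  forall U, inverse_open R U -> U P -> C `&` U !=set0.

Definition closed_in_Max R (D : set (set K)) : Prop :=
  forall P, Max R P -> adherent R D P -> D P.

Lemma adherentS R (C D : set (set K)) P : C `<=` D ->
  adherent R C P -> adherent R D P.
Proof.
move=> CD adh U hU UP; have [y [Cy Uy]] := adh U hU UP.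
by exists y; split=> //; exact: CD.
Qed.

Lemma closed_in_Max_nonisolated R D : closed_in_Max R D ->
  closed_in_Max R (nonisolated R D).
Proof.
move=> hD P MP adh; have DP : D P.
  by apply: hD => // U hU UP; have [y [[Dy _] Uy]] := adh U hU UP; exists y.
split=> // U hU UP; have [y [[Dy ny] Uy]] := adh U hU UP.
have [yP|yP] := pselect (y = P); last by exists y.
by rewrite -yP; apply: ny => //; rewrite yP.
Qed.

Lemma closed_in_Max_meet R (I : Type) (J : set I) (F : I -> set (set K)) :
  (forall i, J i -> closed_in_Max R (F i)) ->
  closed_in_Max R [set P | forall i, J i -> F i P].
Proof.
move=> hF P MP adh i Ji; apply: hF => // U hU UP.
by have [y [Fy Uy]] := adh U hU UP; exists y; split=> //; exact: Fy.
Qed.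

End InverseTopology.

Section Contraction.
Variable K : fieldType.
Implicit Types (R T P Q : set K) (C : set (set K)).

Lemma localization_common_denominator R P (s : seq K) : is_subring R ->
  is_prime_ideal R P -> [set` s] `<=` localization R P ->
  exists2 d, R d /\ ~ P d & forall x, x \in s -> R (d * x).
Proof.
move=> hR hP; elim: s => [|y s IH] sL.
  by exists 1 => //; split; [exact: subring1 hR|exact: hP.2.1].
have [d [Rd Pd] ds] : exists2 d, R d /\ ~ P d & forall x, x \in s -> R (d * x).
  by apply: IH => x xs; apply: sL; rewrite /= in_cons xs orbT.
have [a [u [Ra [Ru [Pu ->]]]]] := sL y (mem_head y s).
exists (u * d).
  by split; [exact (subringM hR Ru Rd)|exact (prime_idealM_notin hP Ru Rd Pu Pd)].
move=> x; rewrite in_cons => /orP[/eqP->|xs]; last first.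
  by rewrite -mulrA; exact (subringM hR Ru (ds x xs)).
have -> : u * d * (a / u) = d * a by field; exact: ideal_neq0 hP.1 Pu.
exact (subringM hR Rd Ra).
Qed.

Lemma T_of_not_contracted R C Q (s : seq K) : almost_dedekind R ->
  C `<=` Spec R -> is_maximal_ideal R Q -> [set` s] `<=` Q ->
  (forall P, C P -> ~ [set` s] `<=` P) -> ~ contracted_from (T_of R C) R Q.
Proof.
move=> hAD hC hQ sQ Cs cQ; have hR := hAD.1; have hQp := maximal_ideal_prime hR hQ.
have [v hv] := almost_dedekind_valuation hAD hQ.
have [t [Qt [t0 vt]]] := exists_uniformizer hR hQp hv.
have [d [Rd Qd] dR] : exists2 d, R d /\ ~ Q d &
    forall y, y \in map (fun j => j / t) s -> R (d * y).
  apply: localization_common_denominator => // _ /mapP[j js ->].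
  exact (localization_div_uniformizer hR hQp hv t0 vt (sQ j js)).
have Td : T_of R C (d / t).
  move=> P CP; have [j js Pj] : exists2 j, j \in s & ~ P j.
    apply: contrapT => h; apply: (Cs P CP) => j js; apply: contrapT => Pj.
    by apply: h; exists j.
  exists (d * (j / t)), j; split; first exact: dR (map_f _ js).
  split; first exact (ideal_sub hQp.1 (sQ j js)).
  by split=> //; field; rewrite t0 (ideal_neq0 (hC P CP).1 Pj).
by apply: Qd; rewrite -(divfK t0 d); apply: contracted_absorb cQ Td Qt _; rewrite divfK.
Qed.

Lemma contracted_adherent R C Q : almost_dedekind R -> C `<=` Spec R ->
  is_maximal_ideal R Q -> contracted_from (T_of R C) R Q -> adherent R C Q.
Proof.
move=> hAD hC hQ cQ U hU UQ; have [s [sQ sU]] := inverse_open_locus hU UQ.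
have [[P CP sP]|noP] := pselect (exists2 P, C P & [set` s] `<=` P).
  by exists P; split=> //; apply: sU; split=> //; exact: hC.
by case: (T_of_not_contracted hAD hC hQ sQ) => // P CP sP; apply: noP; exists P.
Qed.

Lemma ideal_gen_contracted R T P : is_subring R -> R `<=` T ->
  is_maximal_ideal R P -> is_ideal T (ideal_gen T P) -> ~ ideal_gen T P 1 ->
  ideal_gen T P `&` R = P.
Proof.
move=> hR RT [hP [P1 Pmax]] hPT PT1.
have PPT : P `<=` ideal_gen T P `&` R.
  by move=> x Px; split; [exact: ideal_gen_sub|exact (ideal_sub hP Px)].
case: (Pmax _ (ideal_setIr hR RT hPT) PPT) => // PTR.
by have [] : (ideal_gen T P `&` R) 1 by rewrite PTR; exact: subring1 hR.
Qed.

End Contraction.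

Section CriticalIdeals.
Variable K : fieldType.
Implicit Types (R T P : set K) (C D : set (set K)).

Lemma crit_contracted_other R T P (s : seq K) : almost_dedekind R ->
  is_subring T -> R `<=` T -> is_maximal_ideal R P -> Crit T (ideal_gen T P) ->
  [set` s] `<=` P ->
  exists Q, [/\ is_maximal_ideal R Q, contracted_from T R Q, [set` s] `<=` Q & Q <> P].
Proof.
move=> hAD hT RT hP [[hPT [PT1 PTmax]] crit] sP; have hR := hAD.1.
have hPp := maximal_ideal_prime hR hP.
have [v hv] := almost_dedekind_valuation hAD hP.
have [t [Pt [t0 vt]]] := exists_uniformizer hR hPp hv.
have tsP : [set` t :: s] `<=` P by move=> x; rewrite /= in_cons => /orP[/eqP->|/sP].
have [N [hN tsN2]] := crit (t :: s) (fun x xts => RT _ (ideal_sub hP.1 (tsP x xts)))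
  (ideal_gen_min hPT (subset_trans tsP (@ideal_gen_sub _ T P))).
have tsN : [set` t :: s] `<=` N.
  by move=> x xts; apply: (ideal_sq_sub hN.1); apply: tsN2; exact: ideal_gen_sub.
have Rt := ideal_sub hP.1 Pt.
have hQ : is_maximal_ideal R (N `&` R).
  apply: (prime_neq0_maximal hAD (ideal_setIr_prime hR hT RT hN) _ t0).
  by split=> //; apply: tsN; exact: mem_head.
exists (N `&` R); split=> //; first by exists N; split=> //; exact: hN.1.
  move=> x xs; split; last exact (ideal_sub hP.1 (sP x xs)).
  by apply: tsN; rewrite /= in_cons xs orbT.
move=> NP; have PTN : ideal_gen T P = N.
  have PN : P `<=` N by rewrite -NP => x [].
  case: (PTmax N hN.1 (ideal_gen_min hN.1 PN)) => // NT.
  by case: hN => _ [+ _]; rewrite NT; case; exact: subring1 hT.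
have TL : T `<=` localization R P.
  apply: (contracted_sub_localization hR hPp hv); exists (ideal_gen T P).
  by split=> //; exact: ideal_gen_contracted.
apply: (uniformizer_notin_sq hR hPp hv RT hT TL t0 vt).
by rewrite PTN; apply: tsN2; apply: ideal_gen_sub; exact: mem_head.
Qed.

Lemma crit_nonisolated R C D P : almost_dedekind R -> C `<=` Max R ->
  C `<=` D -> closed_in_Max R D -> Max R P ->
  Crit (T_of R C) (ideal_gen (T_of R C) P) -> nonisolated R D P.
Proof.
move=> hAD CM CD hD hP hcrit; have hR := hAD.1.
have hC : C `<=` Spec R by move=> Q /CM; exact: maximal_ideal_prime hR.
have [hT RT] := (T_of_subring hR hC, sub_T_of hR hC).
have contracted_in_D Q : Max R Q -> contracted_from (T_of R C) R Q -> D Q.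
  by move=> hQ cQ; apply: hD => //; apply: adherentS CD _; exact: contracted_adherent.
have [[hPT [PT1 _]] _] := hcrit.
split.
  apply: contracted_in_D => //; exists (ideal_gen (T_of R C) P).
  by split=> //; exact: ideal_gen_contracted.
move=> U hU UP; have [s [sP sU]] := inverse_open_locus hU UP.
have [Q [hQ cQ sQ QP]] := crit_contracted_other hAD hT RT hP hcrit sP.
exists Q; split; first exact: contracted_in_D.
by split=> //; apply: sU; split=> //; exact: maximal_ideal_prime hR hQ.
Qed.

End CriticalIdeals.

Lemma zero_succ_or_limit (W : Type) (lt : W -> W -> Prop) w :
  [\/ is_zero lt w, exists v, is_succ_of lt v w | is_limit lt w].
Proof.
have [z|nz] := pselect (is_zero lt w); first by apply: Or31.
have [s|ns] := pselect (exists v, is_succ_of lt v w); first by apply: Or32.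
by apply: Or33; split=> // v sv; apply: ns; exists v.
Qed.

Lemma crit_deriv_invariant (K : fieldType) (R : set K) (W : Type)
  (lt : W -> W -> Prop) (C D : W -> set (set K)) : almost_dedekind R ->
  well_founded lt -> crit_seq R lt C -> deriv_seq R lt D ->
  forall w, [/\ C w `<=` Max R, closed_in_Max R (D w) & C w `<=` D w].
Proof.
move=> hAD wf hC hD; elim/(well_founded_ind wf) => w IH.
have [hC0 [hCs hCl]] := hC w; have [hD0 [hDs hDl]] := hD w.
case: (zero_succ_or_limit lt w) => [z|[v sv]|l].
- by rewrite (hC0 z) (hD0 z); split=> // P hP _.
- have [CM Dcl CD] := IH v sv.1; rewrite (hCs v sv) (hDs v sv); split.
  + by move=> P [].
  + exact: closed_in_Max_nonisolated.
  + by move=> P [hP hcrit]; exact: crit_nonisolated hAD CM CD Dcl hP hcrit.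
- have [u lu] : exists u, lt u w.
    by apply: contrapT => h; apply: l.1 => u lu; apply: h; exists u.
  rewrite (hCl l) (hDl l); split.
  + by move=> P CP; have [CM _ _] := IH u lu; exact: CM (CP u lu).
  + by apply: closed_in_Max_meet => v lv; have [] := IH v lv.
  + by move=> P CP v lv; have [_ _ CD] := IH v lv; exact: CD (CP v lv).
Qed.

Unset Implicit Arguments.
Set Strict Implicit.

Theorem lemma5p4 (K : fieldType) (R : set K)
  (hR : almost_dedekind R) (hK : is_quotient_field_of R)
  (W : Type) (lt : W -> W -> Prop) (hW : is_wellorder lt)
  (C D : W -> set (set K))
  (hC : crit_seq R lt C) (hD : deriv_seq R lt D) (a : W) :
  C a `<=` D a.
Proof.
have [_ [_ [_ wf]]] := hW.
by have [_ _] := crit_deriv_invariant hR wf hC hD a.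
Qed.
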